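(* Let $h\ge1$ be an integer and $r$ a real number with $r\ge 36h^3$. Let $\beta$ be a real-valued function on the positive integers such that $\beta(m)=0$ for all $m\le r$, and such that for every integer $m>r$ there exist positive integers $m_1,m_2$ with $m_1,m_2\ge m/3$, $m\le m_1+m_2\le m+h^{3/2}\sqrt m$, and $$\beta(m)\le \beta(m_1)+\beta(m_2)+h^{3/2}\sqrt m.$$ Then for every positive integer $m$, $$\beta(m)\le\begin{cases}\dfrac{10h^{3/2}m}{\sqrt{r/3}}-10h^{3/2}\sqrt m, & \text{if } m\ge r/3,\\[2mm] 0,&\text{otherwise.}\end{cases}$$ *)

From Stdlib Require Import Reals Lra Lia.
Open Scope R_scope.

Definition pow32 (h : nat) : R := INR h * sqrt (INR h).

(** The claimed bound is [phi (sqrt m)] with [phi t = 10 H t^2 / s - 10 H t],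
    [H = h^(3/2)] and [s = sqrt (r/3)]; it is nonnegative exactly when
    [m >= r/3], which covers the base range [m <= r].  For [m > r] a split
    [m1, m2 >= m/3] has [sqrt m1 + sqrt m2 >= 1.39 sqrt m], while
    [m1 + m2 - m <= H sqrt m] and [H <= s / sqrt 12 < 0.289 s]; this makes
    [phi (sqrt m1) + phi (sqrt m2) + H sqrt m <= phi (sqrt m)], and strong
    induction on [m] concludes, since [m > 36 H^2] forces [m1, m2 < m]. *)

From Stdlib Require Import Reals Lra Lia Psatz Arith.
Open Scope R_scope.

Definition bound (H r x : R) : R :=
  if Rle_dec (r / 3) x then 10 * H * x / sqrt (r / 3) - 10 * H * sqrt x else 0.

Lemma sqrt_sum_ge (a b x : R) :
  0 <= a -> 0 <= b -> 0 < x ->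
  x ^ 2 / 3 <= a ^ 2 -> x ^ 2 / 3 <= b ^ 2 -> x ^ 2 <= a ^ 2 + b ^ 2 ->
  1.39 * x <= a + b.
Proof.
  intros Ha Hb Hx Ha3 Hb3 Hab.
  (* [(a^2 - x^2/3) (b^2 - x^2/3) >= 0] gives [a^2 b^2 >= 2/9 x^4]. *)
  assert (prod_sq : 2 / 9 * x ^ 4 <= (a * b) ^ 2) by nra.
  assert (prod : 0.471 * x ^ 2 <= a * b).
  { apply Rnot_lt_le; intro Hlt.
    assert (0 <= a * b) by nra.
    nra. }
  apply Rsqr_incr_0_var; [unfold Rsqr; nra | lra].
Qed.

Lemma quadratic_split_step (H s a b x : R) :
  0 < H -> 0 < s -> 12 * H ^ 2 <= s ^ 2 ->
  0 <= a -> 0 <= b -> 0 < x ->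
  x ^ 2 / 3 <= a ^ 2 -> x ^ 2 / 3 <= b ^ 2 ->
  x ^ 2 <= a ^ 2 + b ^ 2 -> a ^ 2 + b ^ 2 <= x ^ 2 + H * x ->
  10 * H * a ^ 2 / s - 10 * H * a + (10 * H * b ^ 2 / s - 10 * H * b) + H * x
    <= 10 * H * x ^ 2 / s - 10 * H * x.
Proof.
  intros HH Hs Hsq Ha Hb Hx Ha3 Hb3 Hlo Hhi.
  assert (H_small : H <= 0.289 * s) by nra.
  assert (roots : 1.39 * x <= a + b) by (apply sqrt_sum_ge; assumption).
  assert (sH : 0 < s * H) by nra.
  assert (Hx_pos : 0 < H * x) by nra.
  assert (gain : 2.9 * s * H * x <= s * (10 * H * (a + b) - 11 * H * x)) by nra.
  assert (loss : 10 * H * (a ^ 2 + b ^ 2 - x ^ 2) <= 2.89 * s * H * x) by nra.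
  assert (excess : 10 * H * (a ^ 2 + b ^ 2 - x ^ 2) - s * (10 * H * (a + b) - 11 * H * x) <= 0)
    by nra.
  assert (diff :
    10 * H * a ^ 2 / s - 10 * H * a + (10 * H * b ^ 2 / s - 10 * H * b) + H * x
      - (10 * H * x ^ 2 / s - 10 * H * x)
    = (10 * H * (a ^ 2 + b ^ 2 - x ^ 2) - s * (10 * H * (a + b) - 11 * H * x)) / s)
    by (field; lra).
  assert (0 <= - (10 * H * (a ^ 2 + b ^ 2 - x ^ 2) - s * (10 * H * (a + b) - 11 * H * x)) * / s)
    by (apply Rmult_le_pos; [lra | left; apply Rinv_0_lt_compat; lra]).
  unfold Rdiv in *; lra.
Qed.

Lemma bound_nonneg (H r x : R) : 0 <= H -> 0 < r -> 0 <= bound H r x.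
Proof.
  intros HH Hr. unfold bound.
  destruct (Rle_dec (r / 3) x) as [Hx | _]; [|lra].
  set (s := sqrt (r / 3)).
  assert (Hs : 0 < s) by (apply sqrt_lt_R0; lra).
  assert (Hsx : s <= sqrt x) by (apply sqrt_le_1_alt; exact Hx).
  assert (Ex : x = sqrt x ^ 2) by (rewrite pow2_sqrt; lra).
  assert (E : 10 * H * x / s - 10 * H * sqrt x = 10 * H * sqrt x * (sqrt x - s) / s)
    by (rewrite Ex at 1; field; lra).
  rewrite E. unfold Rdiv.
  apply Rmult_le_pos; [|left; apply Rinv_0_lt_compat; lra].
  apply Rmult_le_pos; [apply Rmult_le_pos; [lra | apply sqrt_pos] | lra].
Qed.

Lemma bound_split_step (H r M M1 M2 : R) :
  0 < H -> 36 * H ^ 2 <= r -> r < M ->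
  M / 3 <= M1 -> M / 3 <= M2 -> M <= M1 + M2 -> M1 + M2 <= M + H * sqrt M ->
  bound H r M1 + bound H r M2 + H * sqrt M <= bound H r M.
Proof.
  intros HH Hr HM H1 H2 Hlo Hhi. unfold bound.
  assert (r_pos : 0 < r) by nra.
  destruct (Rle_dec (r / 3) M1); [|lra].
  destruct (Rle_dec (r / 3) M2); [|lra].
  destruct (Rle_dec (r / 3) M); [|lra].
  pose proof (quadratic_split_step H (sqrt (r / 3)) (sqrt M1) (sqrt M2) (sqrt M)) as step.
  rewrite !pow2_sqrt in step by lra.
  apply step; try lra; try apply sqrt_pos; apply sqrt_lt_R0; lra.
Qed.

Lemma split_part_lt (H r M M1 M2 : R) :
  0 < H -> 36 * H ^ 2 <= r -> r < M ->
  M / 3 <= M2 -> M1 + M2 <= M + H * sqrt M -> M1 < M.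
Proof.
  intros HH Hr HM H2 Hhi.
  assert (Ex : sqrt M ^ 2 = M) by (apply pow2_sqrt; nra).
  (* [M > 36 H^2] means [sqrt M > 6 H], so [H sqrt M < M / 6]. *)
  assert (root_big : 6 * H < sqrt M).
  { apply Rnot_le_lt; intro Hle.
    assert (0 <= sqrt M) by apply sqrt_pos.
    nra. }
  nra.
Qed.

Section SubadditiveRecursion.

Variables (H r : R) (beta : nat -> R).
Hypothesis H_pos : 0 < H.
Hypothesis r_large : 36 * H ^ 2 <= r.
Hypothesis beta_small : forall m : nat, (1 <= m)%nat -> INR m <= r -> beta m = 0.
Hypothesis beta_split : forall m : nat, (1 <= m)%nat -> INR m > r ->
  exists m1 m2 : nat, (1 <= m1)%nat /\ (1 <= m2)%nat /\
    INR m1 >= INR m / 3 /\ INR m2 >= INR m / 3 /\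
    INR m <= INR m1 + INR m2 /\
    INR m1 + INR m2 <= INR m + H * sqrt (INR m) /\
    beta m <= beta m1 + beta m2 + H * sqrt (INR m).

Lemma beta_le_bound (m : nat) : (1 <= m)%nat -> beta m <= bound H r (INR m).
Proof.
  induction m as [m IH] using lt_wf_ind. intros Hm.
  destruct (Rle_lt_dec (INR m) r) as [Hle | Hgt].
  - rewrite beta_small by assumption. apply bound_nonneg; nra.
  - destruct (beta_split m Hm Hgt)
      as (m1 & m2 & Hm1 & Hm2 & H1 & H2 & Hlo & Hhi & Hbeta).
    assert (lt1 : (m1 < m)%nat).
    { apply INR_lt, (split_part_lt H r _ _ (INR m2)); lra. }
    assert (lt2 : (m2 < m)%nat).
    { apply INR_lt, (split_part_lt H r _ _ (INR m1)); lra. }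
    pose proof (IH m1 lt1 Hm1). pose proof (IH m2 lt2 Hm2).
    pose proof (bound_split_step H r (INR m) (INR m1) (INR m2)).
    lra.
Qed.

End SubadditiveRecursion.

Lemma pow32_sq (h : nat) : pow32 h ^ 2 = INR h ^ 3.
Proof.
  unfold pow32.
  replace ((INR h * sqrt (INR h)) ^ 2) with (INR h ^ 2 * sqrt (INR h) ^ 2) by ring.
  rewrite pow2_sqrt by apply pos_INR. ring.
Qed.

Lemma pow32_pos (h : nat) : (1 <= h)%nat -> 0 < pow32 h.
Proof.
  intros Hh. assert (0 < INR h) by (apply lt_0_INR; lia).
  unfold pow32. apply Rmult_lt_0_compat; [assumption | apply sqrt_lt_R0; assumption].
Qed.

Theorem mainTheorem2 (h : nat) (r : R) (beta : nat -> R)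
  (hh : (1 <= h)%nat)
  (hr : r >= 36 * INR h ^ 3)
  (hzero : forall m : nat, (1 <= m)%nat -> INR m <= r -> beta m = 0)
  (hrec : forall m : nat, (1 <= m)%nat -> INR m > r ->
     exists m1 m2 : nat, (1 <= m1)%nat /\ (1 <= m2)%nat /\
       INR m1 >= INR m / 3 /\ INR m2 >= INR m / 3 /\
       INR m <= INR m1 + INR m2 /\
       INR m1 + INR m2 <= INR m + pow32 h * sqrt (INR m) /\
       beta m <= beta m1 + beta m2 + pow32 h * sqrt (INR m)) :
  forall m : nat, (1 <= m)%nat ->
    beta m <= (if Rle_dec (r / 3) (INR m)
               then 10 * pow32 h * INR m / sqrt (r / 3) - 10 * pow32 h * sqrt (INR m)
               else 0).
Proof.
  apply (beta_le_bound (pow32 h) r beta).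
  - exact (pow32_pos h hh).
  - rewrite pow32_sq. lra.
  - exact hzero.
  - exact hrec.
Qed.
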